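(* Let $p$ be a prime number and $G$ a transitive group of degree $p^{2}$. Then there exists $s\in\mathfrak{S}_{p^{2}}$ such that $sGs^{-1}$ contains $P_{1}$ or $P'_{1}$.
   Context: Transitive group of degree $p^2$: a subgroup of $\mathfrak{S}_{p^2}$ acting transitively on $\mathbb{Z}/p^2$. Identify $\mathbb{Z}/p^{2}$ with $\mathbb{F}_{p}\times\mathbb{F}_{p}$ via $a+pb\mapsto(a\bmod p,b\bmod p)$ ($0\le a,b\le p-1$). Let $\rho_{1}(i,j)=(i,j+1)$, $\rho_{2}(i,j)=(i+1,j)$; for $i_0\in\{0,\dots,p-1\}$, $z_{i_0}(i_0,j)=(i_0,j+1)$ and $z_{i_0}(i,j)=(i,j)$ for $i\ne i_0$. With $a_{i,j}=(-1)^{i-j}\binom{i}{j}$ for $i\ge j$ and $0$ otherwise, $\gamma_{n}:=z_{0}^{a_{p-n,0}}\cdots z_{p-1}^{a_{p-n,p-1}}$. Put $\tau:=z_{p-1}\rho_{2}$, $P_{1}:=\langle\tau,\gamma_{1}\rangle$ and $P'_{1}:=\langle\rho_{1},\rho_{2},\gamma_{1}\rangle$. *)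

From HB Require Import structures.
From mathcomp Require Import all_boot all_order all_algebra all_fingroup.
Set Implicit Arguments. Unset Strict Implicit. Unset Printing Implicit Defensive.
Import GRing.Theory.

Local Open Scope group_scope.

(* Points of Z/p^2 are the ordinals 'I_(p^2); n = a + p*b corresponds to the
   pair (a, b) = (n %% p, n %/ p) of F_p x F_p. *)

Definition coordmap (p : nat) (F : nat -> nat -> nat * nat)
  (x : 'I_(p ^ 2)) : 'I_(p ^ 2) :=
  let ij := F (x %% p)%N (x %/ p)%N in
  insubd x (ij.1 %% p + p * (ij.2 %% p))%N.

(* The permutation equal to f (f will always be a bijection below;
   the default 1 is never used in that case). *)
Definition mkperm (n : nat) (f : 'I_n -> 'I_n) : {perm 'I_n} :=
  odflt 1 [pick s : {perm 'I_n} | [forall x, s x == f x]].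

(* Function composition s o t ("apply t first"), in MathComp's
   left-to-right product convention. *)
Definition fcomp (n : nat) (s t : {perm 'I_n}) : {perm 'I_n} := t * s.

Definition rho1 (p : nat) : {perm 'I_(p ^ 2)} :=
  @mkperm (p ^ 2) (@coordmap p (fun i j => (i, j.+1))).
Definition rho2 (p : nat) : {perm 'I_(p ^ 2)} :=
  @mkperm (p ^ 2) (@coordmap p (fun i j => (i.+1, j))).

Definition zz (p i0 : nat) : {perm 'I_(p ^ 2)} :=
  @mkperm (p ^ 2) (@coordmap p (fun i j => if i == i0 then (i, j.+1) else (i, j))).

Definition zpow (gT : finGroupType) (x : gT) (k : int) : gT :=
  match k with Posz n => x ^+ n | Negz n => x ^- n.+1 end.

Definition acoef (i j : nat) : int :=
  if (j <= i)%N then ((-1) ^+ (i - j) * ('C(i, j))%:Z)%R else 0%R.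

Definition gamma (p n : nat) : {perm 'I_(p ^ 2)} :=
  \big[@fcomp (p ^ 2)/1]_(i < p) zpow (zz p i) (acoef (p - n) i).

Definition tau (p : nat) : {perm 'I_(p ^ 2)} := fcomp (zz p (p - 1)) (rho2 p).

Definition P1 (p : nat) : {group {perm 'I_(p ^ 2)}} :=
  <<[set tau p; gamma p 1]>>%G.
Definition P1' (p : nat) : {group {perm 'I_(p ^ 2)}} :=
  <<[set rho1 p; rho2 p; gamma p 1]>>%G.

From HB Require Import structures.
From mathcomp Require Import all_boot all_order all_algebra all_fingroup.
From mathcomp Require Import all_solvable zify ring.
Local Open Scope group_scope.
Set Implicit Arguments. Unset Strict Implicit. Unset Printing Implicit Defensive.
Import GRing.Theory.

(* A Sylow p-subgroup of a transitive group of degree p^2 is still transitive,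
   and in it a central element z of order p together with any element moving
   the base point out of its <[z]>-orbit generates a transitive abelian
   subgroup A.  Transitive abelian groups are regular, so |A| = p^2 and A is
   cyclic or elementary abelian.  Isomorphic regular permutation groups are
   conjugate, and the regular groups <[tau]> (cyclic, containing P1 since
   tau^p = rho1 = gamma_1) and P1' = <rho1, rho2> (elementary abelian, as
   gamma_1 = rho1) cover the two cases.  The identity gamma_1 = rho1 holds
   because a_{p-1,i} = 1 mod p and z_i^p = 1. *)

Definition regular (T : finType) (A : {set {perm T}}) :=
  [transitive A, on [set: T] | 'P] && (#|A| == #|T|).

Section RegularGroups.
Variable T : finType.
Implicit Types (A B G P : {group {perm T}}) (x : T).

Lemma transitiveT_orbit A x :
  [transitive A, on [set: T] | 'P] = (orbit 'P A x == [set: T]).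
Proof.
apply/idP/eqP => [trA | orbitT]; first by rewrite (atransP trA).
by apply/imsetP; exists x.
Qed.

Lemma cent_transitive_semiregular A c x :
  [transitive A, on [set: T] | 'P] -> c \in 'C(A) -> c x = x -> c = 1.
Proof.
move=> trA /centP cAc cx; apply/permP => y; rewrite perm1.
have /orbitP[g Ag <-] : y \in orbit 'P A x by rewrite (atransP trA x (in_setT x)).
by rewrite /= apermE -permM -(cAc g Ag) permM cx.
Qed.

Lemma regularP A x : reflect ('C_A[x | 'P] = 1 /\ #|A| = #|T|) (regular A).
Proof.
have card_os := card_orbit_stab 'P A x.
rewrite /regular (transitiveT_orbit A x).
apply: (iffP andP) => [[/eqP orbitT /eqP cardA] | [stab1 cardA]].
  move: card_os; rewrite orbitT cardsT cardA -[RHS]muln1 => /eqP.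
  rewrite eqn_mul2l => /orP[/eqP T0 | /eqP stab_card]; first by move: (card0_eq T0 x).
  by split=> //; apply/eqP; rewrite trivg_card1 stab_card.
move: card_os; rewrite stab1 cards1 muln1 cardA => orbit_card.
by split=> //; rewrite eqEcard subsetT cardsT orbit_card leqnn.
Qed.

Lemma regular_card A : regular A -> #|A| = #|T|.
Proof. by case/andP=> _ /eqP. Qed.

Lemma abelian_transitive_regular A :
  abelian A -> [transitive A, on [set: T] | 'P] -> regular A.
Proof.
move=> abA trA; case/imsetP: (trA) => x _ _.
have stab1 : 'C_A[x | 'P] = 1.
  apply/trivgP/subsetP => c /setIP[Ac /astab1P cx].
  by rewrite inE (cent_transitive_semiregular trA (subsetP abA c Ac) cx).
apply/(regularP _ x); split=> //.
by rewrite -(card_orbit_stab 'P A x) stab1 cards1 muln1 (atransP trA) ?cardsT.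
Qed.

Lemma regular_orbit_inj A x :
  regular A -> {in A &, injective (fun g : {perm T} => g x)}.
Proof.
case/(regularP _ x) => stab1 _ g h Ag Ah gh.
apply/eqP; rewrite eq_mulgV1; apply/eqP/set1gP; rewrite -stab1 inE groupM ?groupV //=.
by apply/astab1P; rewrite /= apermE permM gh -permM mulgV perm1.
Qed.

Lemma regular_isog_conj A B :
  regular A -> regular B -> A \isog B -> exists s : {perm T}, A :^ s = B.
Proof.
move=> regA regB /isogP[f injf fA]; case/andP: (regA) => trA _.
case/imsetP: (trA) => x _ _.
pose a (g : subg_of A) := sgval g x; pose b (g : subg_of A) := f (sgval g) x.
have a_inj : injective a.
  by move=> g h /(regular_orbit_inj regA (subgP g) (subgP h)) /val_inj.
have b_inj : injective b.
  move=> g h /(regular_orbit_inj regB) e.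
  apply/val_inj/(injmP injf); rewrite ?subgP //.
  by apply: e; rewrite -fA mem_morphim ?subgP.
have [|a' aK a'K] := inj_card_bij a_inj.
  by case/andP: regA => _ /eqP <-; rewrite card_sub; apply/eq_leq/eq_card.
have s_inj : injective (b \o a') := inj_comp b_inj (can_inj a'K).
pose s := perm s_inj.
have sE g : g \in A -> s (g x) = f g x.
  move=> Ag; have <- : a (subg A g) = g x by rewrite /a subgK.
  by rewrite permE /= aK /b subgK.
have conj_f u : u \in A -> u ^ s = f u.
  move=> Au; apply/permP => y; rewrite -[y](permKV s).
  have /orbitP[g Ag <-] : s^-1 y \in orbit 'P A x.
    by rewrite (atransP trA x (in_setT x)).
  rewrite conjgE !permM permK /= -(permM g u).
  by rewrite !sE ?groupM // morphM // permM.
exists s; rewrite -fA morphimEdom; apply: eq_in_imset => u Au; exact: conj_f.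
Qed.

Lemma isog_regular_sub_conj B A G :
  regular B -> regular A -> B \isog A -> A \subset G -> exists s, B \subset G :^ s.
Proof.
move=> regB regA isoBA sAG; have [s defA] := regular_isog_conj regB regA isoBA.
by exists s^-1; rewrite -(conjsgK s B) defA conjSg.
Qed.

Lemma regular_cycle (u : {perm T}) x :
  u ^+ #|T| = 1 -> (forall k, (u ^+ k) x = x -> #|T| %| k) -> regular <[u]>.
Proof.
move=> uT fix_u; apply/(regularP _ x); split.
  apply/trivgP/subsetP => g /setIP[/cycleP[k ->] /astab1P /= ukx].
  by rewrite inE -(expg_mod _ uT) (eqP (fix_u k ukx)) expg0.
rewrite -orderE; apply/eqP; rewrite eqn_dvd order_dvdn uT eqxx fix_u //.
by rewrite expg_order perm1.
Qed.

Lemma Sylow_transitive p n G P :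
    prime p -> #|T| = (p ^ n)%N -> [transitive G, on [set: T] | 'P] ->
  p.-Sylow(G) P -> [transitive P, on [set: T] | 'P].
Proof.
move=> p_pr cardT trG sylP; case/imsetP: (trG) => x _ _.
rewrite (transitiveT_orbit P x) eqEcard subsetT cardsT cardT /=.
pose S := 'C_G[x | 'P].
have card_G : #|G| = (p ^ n * #|S|)%N.
  by rewrite -cardT -cardsT -(atransP trG x (in_setT x)) card_orbit_stab.
have card_P : #|P| = (p ^ n * #|S|`_p)%N.
  rewrite (card_Hall sylP) card_G partnM ?expn_gt0 ?cardG_gt0 ?prime_gt0 //.
  by rewrite part_pnat_id // pnatX pnat_id.
have /dvdnP[c def_c] : #|'C_P[x | 'P]| %| #|S|`_p.
  have pstabP : p.-group 'C_P[x | 'P] := pgroupS (subsetIl _ _) (pHall_pgroup sylP).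
  by rewrite -(part_pnat_id pstabP) partn_dvd ?cardSg ?setSI ?(pHall_sub sylP).
have c_gt0 : 0 < c by move: (part_gt0 p #|S|); rewrite def_c muln_gt0 => /andP[].
have := card_orbit_stab 'P P x; rewrite card_P def_c mulnA => /eqP.
by rewrite eqn_mul2r gtn_eqF ?cardG_gt0 //= => /eqP ->; rewrite leq_pmulr.
Qed.

Lemma central_orbit_prime p P y0 :
    prime p -> p.-group P -> P :!=: 1 -> [transitive P, on [set: T] | 'P] ->
  exists2 z, z \in 'Z(P) & #|orbit 'P <[z]> y0| = p.
Proof.
move=> p_pr pP ntP trP.
have ntZ : 'Z(P) :!=: 1 by rewrite (center_nil_eq1 (pgroup_nil pP)).
have [_ p_dv_Z _] := pgroup_pdiv (pgroupS (center_sub P) pP) ntZ.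
have [z Zz oz] := Cauchy p_pr p_dv_Z; exists z => //.
have stab1 : 'C_<[z]>[y0 | 'P] = 1.
  apply/trivgP/subsetP => c /setIP[zc /astab1P cy0]; rewrite inE.
  apply/eqP/(cent_transitive_semiregular trP _ cy0).
  by apply: subsetP zc; rewrite cycle_subG; case/setIP: Zz.
by rewrite -oz orderE -(card_orbit_stab 'P <[z]> y0) stab1 cards1 muln1.
Qed.

Lemma transitive_p2group_abelian_subgroup p P :
    prime p -> #|T| = (p ^ 2)%N -> p.-group P -> [transitive P, on [set: T] | 'P] ->
  exists2 A : {group {perm T}},
    A \subset P & abelian A && [transitive A, on [set: T] | 'P].
Proof.
move=> p_pr cardT pP trP; case/imsetP: (trP) => y0 _ _.
have p_gt1 := prime_gt1 p_pr.
have ntP : P :!=: 1.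
  have := dvdn_orbit 'P P y0; rewrite (atransP trP y0 (in_setT _)) cardsT cardT.
  apply: contraTneq => ->; rewrite cards1 dvdn1 expnS expn1.
  by apply/eqP; nia.
have [z /setIP[Pz cPz] orbit_z] := central_orbit_prime y0 p_pr pP ntP trP.
have /subsetPn[x _ notOx] : ~~ ([set: T] \subset orbit 'P <[z]> y0).
  apply/negP => /subset_leq_card.
  by rewrite cardsT cardT orbit_z leqNgt -{1}(expn1 p) ltn_exp2l.
have /orbitP[h Ph hy0] : x \in orbit 'P P y0 by rewrite (atransP trP y0 (in_setT _)).
have sAP : <[z]> <*> <[h]> \subset P by rewrite join_subG !cycle_subG Pz Ph.
exists (<[z]> <*> <[h]>)%G => //; apply/andP; split.
  rewrite abelianY !cycle_abelian cycle_subG /=.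
  by apply/centP => _ /cycleP[k ->]; apply/commuteX/commute_sym/(centP cPz).
rewrite (transitiveT_orbit _ y0) eqEcard subsetT cardsT cardT /=.
have sub : x |: orbit 'P <[z]> y0 \subset orbit 'P (<[z]> <*> <[h]>) y0.
  rewrite subUset sub1set -hy0 mem_orbit ?imsetS ?joing_subl //.
  by rewrite (subsetP (joing_subr _ _)) ?cycle_id.
have /p_natP[e card_e] : p.-nat #|orbit 'P (<[z]> <*> <[h]>) y0|.
  exact: pnat_dvd (dvdn_orbit _ _ _) (pgroupS sAP pP).
rewrite card_e leq_exp2l // -(ltn_exp2l _ _ p_gt1) expn1 -card_e.
by apply: leq_trans (subset_leq_card sub); rewrite cardsU1 notOx orbit_z.
Qed.

End RegularGroups.

Lemma abelian_p2_cyclic_or_abelem (gT : finGroupType) p (A : {group gT}) :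
  prime p -> abelian A -> #|A| = (p ^ 2)%N -> cyclic A \/ p.-abelem A.
Proof.
move=> p_pr abA cardA.
have /(dvdn_pfactor _ _ p_pr)[e le_e2 exp_e] : exponent A %| p ^ 2.
  by rewrite -cardA exponent_dvdn.
case: e le_e2 exp_e => [|[|[|//]]] _ exp_e.
- by right; rewrite abelemE // abA exp_e dvd1n.
- by right; rewrite abelemE // abA exp_e expn1 dvdnn.
left; have [x Ax ox] := exponent_witness (abelian_nil abA).
apply/cyclicP; exists x; apply/eqP; rewrite eq_sym eqEcard cycle_subG Ax.
by rewrite -orderE -ox exp_e cardA leqnn.
Qed.

Lemma zpow_cong1 (gT : finGroupType) (z : gT) n (k : int) :
  z ^+ n = 1 -> (n%:Z %| (k - 1)%R)%Z -> zpow z k = z.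
Proof.
move=> zn; case: k => m /= dv.
  have /eqP : (m == 1 %[mod n])%Z by rewrite eqz_mod_dvd.
  rewrite !modz_nat => -[m_mod].
  by rewrite -(expg_mod _ zn) m_mod expg_mod.
have dv_m2 : (n %| m.+2)%N.
  by move: dv; rewrite dvdzE; have -> : (Negz m - 1 = - (m.+2)%:Z)%R by lia.
apply/eqP; rewrite eq_invg_mul -expgSr -(expg_mod _ zn) (eqP dv_m2).
by rewrite expg0.
Qed.

Lemma modnS_mod d m : (m %% d).+1 = m.+1 %[mod d].
Proof. by rewrite -[m.+1]addn1 -[(m %% d).+1]addn1 modnDml. Qed.

Lemma acoef_pred_cong1 p i :
  prime p -> i < p -> (p%:Z %| (acoef (p - 1) i - 1)%R)%Z.
Proof.
move=> p_pr lt_ip; set q := p - 1.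
have def_p : p = q.+1 by rewrite /q subn1 prednK ?prime_gt0.
have step k : k < q -> (p%:Z %| (acoef q k - acoef q k.+1)%R)%Z.
  move=> lt_kq.
  have -> : (acoef q k - acoef q k.+1 = - (-1) ^+ (q - k.+1) * ('C(p, k.+1))%:Z)%R.
    rewrite /acoef (ltnW lt_kq) lt_kq def_p binS PoszD.
    have -> : (q - k = (q - k.+1).+1)%N by lia.
    by rewrite exprS; ring.
  by apply: dvdz_mull; rewrite dvdzE /= prime_dvd_bin //; lia.
have acoef_top d : d <= q -> (p%:Z %| (acoef q (q - d) - 1)%R)%Z.
  elim: d => [|d IHd] le_dq.
    by rewrite subn0 /acoef leqnn subnn expr0 mul1r binn subrr dvdz0.
  have -> : (acoef q (q - d.+1) - 1
             = (acoef q (q - d.+1) - acoef q (q - d.+1).+1) + (acoef q (q - d) - 1))%R.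
    have -> : (q - d.+1).+1 = q - d by lia.
    by ring.
  by rewrite rpredD ?IHd ?step //; lia.
have le_iq : i <= q by rewrite /q subn1 -ltnS prednK ?prime_gt0.
by have := acoef_top (q - i) (leq_subr _ _); rewrite subKn.
Qed.

Section Coordinates.
Variable p : nat.
Hypothesis p_gt0 : 0 < p.

Lemma pt_subproof i j : i %% p + p * (j %% p) < p ^ 2.
Proof.
rewrite expnS expn1; apply: (@leq_trans (p + p * (j %% p))).
  by rewrite ltn_add2r ltn_pmod.
by rewrite -mulnS leq_mul2l ltn_pmod ?orbT.
Qed.

Definition pt i j : 'I_(p ^ 2) := Ordinal (pt_subproof i j).

Lemma pt_modp i j : pt i j %% p = i %% p.
Proof. by rewrite /= addnC mulnC modnMDl modn_mod. Qed.

Lemma pt_divp i j : pt i j %/ p = j %% p.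
Proof. by rewrite /= addnC mulnC divnMDl // divn_small ?addn0 ?ltn_pmod. Qed.

Lemma pt_coord (x : 'I_(p ^ 2)) : pt (x %% p) (x %/ p) = x.
Proof.
have x_div_lt : x %/ p < p by rewrite ltn_divLR // -(expnS p 1) ltn_ord.
by apply: val_inj; rewrite /= modn_mod (modn_small x_div_lt) mulnC addnC -divn_eq.
Qed.

Lemma eq_pt i1 j1 i2 j2 :
  (pt i1 j1 == pt i2 j2) = (i1 == i2 %[mod p]) && (j1 == j2 %[mod p]).
Proof.
apply/eqP/andP => [e | [/eqP ei /eqP ej]]; last by apply: val_inj; rewrite /= ei ej.
by rewrite -(pt_modp i1 j1) -(pt_divp i1 j1) e pt_modp pt_divp !eqxx.
Qed.

Lemma pt_eqmod i1 j1 i2 j2 :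
  i1 = i2 %[mod p] -> j1 = j2 %[mod p] -> pt i1 j1 = pt i2 j2.
Proof. by move=> ei ej; apply/eqP; rewrite eq_pt ei ej !eqxx. Qed.

Lemma pt_funext (T : Type) (f g : 'I_(p ^ 2) -> T) :
  (forall i j, f (pt i j) = g (pt i j)) -> f =1 g.
Proof. by move=> fg x; rewrite -[x]pt_coord fg. Qed.

Lemma coordmap_pt F i j :
  @coordmap p F (pt i j) = pt (F (i %% p) (j %% p)).1 (F (i %% p) (j %% p)).2.
Proof.
by apply: val_inj; rewrite /coordmap pt_modp pt_divp insubdK // unfold_in pt_subproof.
Qed.

End Coordinates.

Lemma mkperm_iterE n (f : 'I_n -> 'I_n) m k x :
  0 < m -> iter m f =1 id -> (mkperm f ^+ k) x = iter k f x.
Proof.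
move=> m_gt0 fm; have f_inj : injective f.
  by apply: (can_inj (g := iter m.-1 f)) => y; rewrite -iterSr prednK.
rewrite permX; apply: eq_iter => y; rewrite /mkperm.
case: pickP => [s /forallP/(_ y)/eqP // | no_perm].
by have /forallP[z] := no_perm (perm f_inj); rewrite permE.
Qed.

Fact fcompA n : associative (@fcomp n).
Proof. by move=> s t u; rewrite /fcomp mulgA. Qed.

Fact fcomp1g n : left_id 1 (@fcomp n).
Proof. by move=> s; rewrite /fcomp mulg1. Qed.

Fact fcompg1 n : right_id 1 (@fcomp n).
Proof. by move=> s; rewrite /fcomp mul1g. Qed.

HB.instance Definition _ n :=
  Monoid.isLaw.Build {perm 'I_n} 1 (@fcomp n) (@fcompA n) (@fcomp1g n) (@fcompg1 n).

Section Generators.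
Variable p : nat.
Hypothesis p_gt0 : 0 < p.

Local Notation pt := (pt p_gt0).

Lemma rho1X k i j : (rho1 p ^+ k) (pt i j) = pt i (j + k).
Proof.
have iterE m i' j' :
    iter m (@coordmap p (fun i j => (i, j.+1))) (pt i' j') = pt i' (j' + m).
  elim: m => [|m IHm] /=; first by rewrite addn0.
  by rewrite IHm coordmap_pt addnS; apply: pt_eqmod; rewrite ?modn_mod ?modnS_mod.
rewrite /rho1 (mkperm_iterE _ _ p_gt0) ?iterE //.
by apply: pt_funext => i' j'; rewrite iterE; apply: pt_eqmod; rewrite ?modnDr.
Qed.

Lemma rho2X k i j : (rho2 p ^+ k) (pt i j) = pt (i + k) j.
Proof.
have iterE m i' j' :
    iter m (@coordmap p (fun i j => (i.+1, j))) (pt i' j') = pt (i' + m) j'.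
  elim: m => [|m IHm] /=; first by rewrite addn0.
  by rewrite IHm coordmap_pt addnS; apply: pt_eqmod; rewrite ?modn_mod ?modnS_mod.
rewrite /rho2 (mkperm_iterE _ _ p_gt0) ?iterE //.
by apply: pt_funext => i' j'; rewrite iterE; apply: pt_eqmod; rewrite ?modnDr.
Qed.

Lemma zzX i0 k i j :
  (zz p i0 ^+ k) (pt i j) = if i %% p == i0 then pt i (j + k) else pt i j.
Proof.
have iterE m i' j' :
    iter m (@coordmap p (fun i j => if i == i0 then (i, j.+1) else (i, j))) (pt i' j')
    = if i' %% p == i0 then pt i' (j' + m) else pt i' j'.
  elim: m => [|m IHm] /=; first by case: ifP; rewrite ?addn0.
  rewrite IHm; case: ifP => e; rewrite coordmap_pt e /= ?addnS;
    by apply: pt_eqmod; rewrite ?modn_mod ?modnS_mod.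
rewrite /zz (mkperm_iterE _ _ p_gt0) ?iterE //.
apply: pt_funext => i' j'; rewrite iterE; case: ifP => // _.
by apply: pt_eqmod; rewrite ?modnDr.
Qed.

Lemma rho1E i j : rho1 p (pt i j) = pt i j.+1.
Proof. by rewrite -[rho1 p]expg1 rho1X addn1. Qed.

Lemma rho2E i j : rho2 p (pt i j) = pt i.+1 j.
Proof. by rewrite -[rho2 p]expg1 rho2X addn1. Qed.

Lemma rho1_expp : rho1 p ^+ p = 1.
Proof.
apply/permP; apply: pt_funext => i j.
by rewrite rho1X perm1; apply: pt_eqmod; rewrite ?modnDr.
Qed.

Lemma rho2_expp : rho2 p ^+ p = 1.
Proof.
apply/permP; apply: pt_funext => i j.
by rewrite rho2X perm1; apply: pt_eqmod; rewrite ?modnDr.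
Qed.

Lemma zz_expp i0 : zz p i0 ^+ p = 1.
Proof.
apply/permP; apply: pt_funext => i j; rewrite zzX perm1.
by case: ifP => // _; apply: pt_eqmod; rewrite ?modnDr.
Qed.

Lemma commute_rho1_rho2 : commute (rho1 p) (rho2 p).
Proof. by apply/permP; apply: pt_funext => i j; rewrite !permM !(rho1E, rho2E). Qed.

Lemma modn_eq_pred m : (m %% p == p - 1) = (p %| m.+1).
Proof.
have m_mod_lt := ltn_pmod m p_gt0.
rewrite {2}(divn_eq m p) -addnS dvdn_addr ?dvdn_mull //.
apply/eqP/idP => [-> | dv]; first by rewrite subn1 prednK.
by have := dvdn_leq (ltn0Sn _) dv; lia.
Qed.

Lemma tauE i j : tau p (pt i j) = if p %| i.+2 then pt i.+1 j.+1 else pt i.+1 j.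
Proof.
by rewrite /tau /fcomp permM rho2E -[zz p _]expg1 zzX modn_eq_pred addn1.
Qed.

(* The second coordinate goes up once each time the first one passes p - 1,
   i.e. once for each multiple of p among i + 2, ..., i + k + 1. *)
Lemma tauX k i j :
  (tau p ^+ k) (pt i j) = pt (i + k) (j + ((i + k).+1 %/ p - i.+1 %/ p)).
Proof.
elim: k => [|k IHk]; first by rewrite expg0 perm1 addn0 subnn addn0.
rewrite expgSr permM IHk tauE !addnS (divnS (i + k).+1 p_gt0).
have : i.+1 %/ p <= (i + k).+1 %/ p by rewrite leq_div2r // ltnS leq_addr.
move: (i.+1 %/ p) ((i + k).+1 %/ p) => a b le_ab.
by case: (p %| _); congr pt; lia.
Qed.

Lemma tau_expp : tau p ^+ p = rho1 p.
Proof.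
apply/permP; apply: pt_funext => i j.
rewrite tauX rho1E -addSn divnDr ?dvdnn // divnn p_gt0 addKn addn1.
by apply: pt_eqmod; rewrite ?modnDr.
Qed.

Lemma tau_expp2 : tau p ^+ (p ^ 2) = 1.
Proof. by rewrite [X in _ ^+ X]expnS expn1 expgM tau_expp rho1_expp. Qed.

Lemma tauX_fix k : (tau p ^+ k) (pt 0 0) = pt 0 0 -> p ^ 2 %| k.
Proof.
move=> fix_k; have /dvdnP[q def_k] : p %| k.
  by move/eqP: fix_k; rewrite tauX eq_pt => /andP[]; rewrite add0n mod0n.
move: fix_k; rewrite def_k mulnC expgM tau_expp rho1X => /eqP.
by rewrite eq_pt => /andP[_]; rewrite add0n mod0n expnS expn1 dvdn_pmul2l.
Qed.

Lemma prod_zzE n i j :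
  (\big[@fcomp (p ^ 2)/1]_(k < n) zz p k) (pt i j)
  = if i %% p < n then pt i j.+1 else pt i j.
Proof.
elim: n j => [|n IHn] j; first by rewrite big_ord0 perm1.
rewrite big_ord_recr /fcomp permM -[zz p _]expg1 zzX addn1 ltnS leq_eqVlt.
by case: eqP => [e | _]; rewrite IHn ?e ?ltnn.
Qed.

End Generators.

Section P1Groups.
Variable p : nat.
Hypothesis p_pr : prime p.
Let p_gt0 : 0 < p := prime_gt0 p_pr.

Lemma gamma1_rho1 : gamma p 1 = rho1 p.
Proof.
rewrite /gamma (eq_bigr (fun k : 'I_p => zz p k)) => [|k _]; last first.
  exact: zpow_cong1 (zz_expp _ _) (acoef_pred_cong1 p_pr (ltn_ord k)).
apply/permP; apply: pt_funext => i j.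
by rewrite prod_zzE ltn_pmod // rho1E.
Qed.

Lemma regular_tau : regular <[tau p]>.
Proof.
apply: (regular_cycle (x := pt p_gt0 0 0)); rewrite card_ord.
  exact: tau_expp2.
exact: tauX_fix.
Qed.

Lemma P1_sub_tau : P1 p \subset <[tau p]>.
Proof.
rewrite gen_subG; apply/subsetP => u; rewrite !inE => /orP[]/eqP->.
  exact: cycle_id.
by rewrite gamma1_rho1 -tau_expp // mem_cycle.
Qed.

Lemma P1'_gens_commute :
  {in [set rho1 p; rho2 p; gamma p 1] &, forall u v, commute u v}.
Proof.
have c12 := commute_rho1_rho2 p_gt0.
move=> u v; rewrite gamma1_rho1 !inE -!orbA => /or3P[]/eqP-> /or3P[]/eqP->;
  by [| apply: commute_sym].
Qed.

Lemma abelian_P1' : abelian (P1' p).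
Proof.
by rewrite abelian_gen; apply/centsP => u Au v Av; apply: P1'_gens_commute.
Qed.

Lemma abelem_P1' : p.-abelem (P1' p).
Proof.
rewrite abelemE // abelian_P1' /= abelian_exponent_gen; last first.
  by apply/centsP => u Au v Av; apply: P1'_gens_commute.
apply/exponentP => u; rewrite gamma1_rho1 !inE -orbA => /or3P[]/eqP->;
  by rewrite ?rho1_expp ?rho2_expp.
Qed.

Lemma regular_P1' : regular (P1' p).
Proof.
apply: abelian_transitive_regular abelian_P1' _.
rewrite (transitiveT_orbit _ (pt p_gt0 0 0)); apply/eqP/setP => x.
rewrite !inE -[x]pt_coord; apply/orbitP.
exists (rho2 p ^+ (x %% p) * rho1 p ^+ (x %/ p)).
  by rewrite groupM ?groupX ?mem_gen // !inE eqxx ?orbT.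
by rewrite /= apermE permM rho2X rho1X !add0n.
Qed.

End P1Groups.

Unset Implicit Arguments.
Theorem lemma2p12 (p : nat) (G : {group {perm 'I_(p ^ 2)}}) :
  prime p ->
  [transitive G, on [set: 'I_(p ^ 2)] | 'P] ->
  exists s : {perm 'I_(p ^ 2)},
    (P1 p \subset G :^ s) \/ (P1' p \subset G :^ s).
Proof.
move=> p_pr trG; have cardT : #|'I_(p ^ 2)| = (p ^ 2)%N := card_ord _.
have [S sylS] := Sylow_exists p G.
have [A sAS /andP[abA trA]] := transitive_p2group_abelian_subgroup p_pr cardT
  (pHall_pgroup sylS) (Sylow_transitive p_pr cardT trG sylS).
have sAG : A \subset G := subset_trans sAS (pHall_sub sylS).
have regA := abelian_transitive_regular abA trA.
have cardA : #|A| = (p ^ 2)%N by rewrite (regular_card regA).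
have same_card (B : {group {perm 'I_(p ^ 2)}}) : regular B -> #|A| == #|B|.
  by move/regular_card->; rewrite cardA cardT.
case: (abelian_p2_cyclic_or_abelem p_pr abA cardA) => [cycA | abelA].
  have [|s tauGs] := isog_regular_sub_conj (regular_tau p_pr) regA _ sAG.
    by rewrite isog_cyclic_card ?cycle_cyclic // cycA same_card ?regular_tau.
  by exists s; left; apply: subset_trans (P1_sub_tau p_pr) tauGs.
have [|s P1'Gs] := isog_regular_sub_conj (regular_P1' p_pr) regA _ sAG.
  by rewrite (isog_abelem_card _ (abelem_P1' p_pr)) abelA same_card ?regular_P1'.
by exists s; right.
Qed.
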